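(* Let $(M,g)$ be a pseudo-Riemannian manifold of dimension $n\ge3$ and $\nabla$ a torsion free, Ricci symmetric connection on $M$ with curvature tensor $R$. Then $(M,g,\nabla)$ is equiaffine Einstein if and only if $\pi_2(R)=0=\pi_3(R)$ at every point.
   Context: The curvature operator is $\mathcal{R}(u,v)=\nabla_u\nabla_v-\nabla_v\nabla_u-\nabla_{[u,v]}$ and $R(x,y,z,w):=g(\mathcal{R}(x,y)z,w)$. $Ric(x,y):=\mathrm{Tr}(z\mapsto\mathcal{R}(z,x)y)=g^{ij}R(e_i,x,y,e_j)$; $\nabla$ is Ricci symmetric if $Ric$ is symmetric; $\tau:=g^{il}g^{jk}R_{ijkl}$ (the $g$-trace of $Ric$). $(M,g,\nabla)$ is equiaffine Einstein if $Ric=\lambda g$ for some smooth function $\lambda$. For bilinear forms $h,k$: $Sh(x,y)=\tfrac12[h(x,y)+h(y,x)]$, $\Lambda h(x,y)=\tfrac12[h(x,y)-h(y,x)]$, $(h\cdot k)(x,y,z,w)=h(x,y)k(z,w)$, $(h\wedge k)(x,y,z,w)=h(x,z)k(y,w)-h(y,z)k(x,w)$. Pointwise, $\pi_2(R):=\tfrac1{n-1}\big[\tfrac{\tau}{n}g-S\,Ric\big]\wedge g$ and $\pi_3(R):=-\tfrac1{n+1}\big[2\Lambda Ric\cdot g+\Lambda Ric\wedge g\big]$. *)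

From mathcomp Require Import all_boot all_order all_algebra.
From mathcomp Require Import reals.
Set Implicit Arguments. Unset Strict Implicit. Unset Printing Implicit Defensive.
Import Order.TTheory GRing.Theory Num.Theory.
Local Open Scope ring_scope.

(* Components of a (0,4)-tensor at a point, w.r.t. a frame e_0..e_{n-1}:
   t i j k l = T(e_i,e_j,e_k,e_l). *)
Definition tensor4 (R : Type) (n : nat) := 'I_n -> 'I_n -> 'I_n -> 'I_n -> R.

Section Alg.
Variables (R : fieldType) (n : nat).

Definition ginv (g : 'M[R]_n) : 'M[R]_n := invmx g.

Definition ricci (g : 'M[R]_n) (Rm : tensor4 R n) : 'M[R]_n :=
  \matrix_(a, b) \sum_i \sum_j ginv g i j * Rm i a b j.

Definition scal (g : 'M[R]_n) (Rm : tensor4 R n) : R :=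
  \sum_i \sum_j \sum_k \sum_l ginv g i l * ginv g j k * Rm i j k l.

Definition symp (h : 'M[R]_n) : 'M[R]_n := \matrix_(x, y) ((h x y + h y x) / 2%:R).
Definition antip (h : 'M[R]_n) : 'M[R]_n := \matrix_(x, y) ((h x y - h y x) / 2%:R).

Definition dotp (h k : 'M[R]_n) : tensor4 R n := fun x y z w => h x y * k z w.
Definition wedgep (h k : 'M[R]_n) : tensor4 R n :=
  fun x y z w => h x z * k y w - h y z * k x w.

Definition pi2 (g : 'M[R]_n) (Rm : tensor4 R n) : tensor4 R n :=
  fun x y z w => (n%:R - 1)^-1 *
    wedgep ((scal g Rm / n%:R) *: g - symp (ricci g Rm)) g x y z w.

Definition pi3 (g : 'M[R]_n) (Rm : tensor4 R n) : tensor4 R n :=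
  fun x y z w => - (n%:R + 1)^-1 *
    (2%:R * dotp (antip (ricci g Rm)) g x y z w + wedgep (antip (ricci g Rm)) g x y z w).

End Alg.

From mathcomp Require Import all_boot all_order all_algebra.
From mathcomp Require Import reals.
Import Order.TTheory GRing.Theory Num.Theory.
Set Implicit Arguments. Unset Strict Implicit.
Local Open Scope ring_scope.

(* When Ric is symmetric, Lambda Ric = 0 kills pi_3, and pi_2(R) is
   1/(n-1) h /\ g for h := (tau/n) g - Ric.  Contracting h /\ g = 0 with
   g^{-1} in two ways yields n h = h, so h = 0 as n <> 1; conversely,
   tracing Ric = lam g gives tau = n lam, i.e. h = 0. *)

Section CurvatureDecomposition.
Variables (R : fieldType) (n : nat).
Implicit Types (g h A : 'M[R]_n) (Rm : tensor4 R n).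

Lemma symp_symmetric A : (2%:R : R) != 0 -> A^T = A -> symp A = A.
Proof.
move=> two_neq0 sA; apply/matrixP=> x y; rewrite !mxE.
have -> : A y x = A x y by rewrite -[in LHS]sA mxE.
by rewrite -mulr2n -(mulr_natr (A x y)) mulfK.
Qed.

Lemma antip_symmetric A : A^T = A -> antip A = 0.
Proof.
move=> sA; apply/matrixP=> x y; rewrite !mxE.
have -> : A y x = A x y by rewrite -[in LHS]sA mxE.
by rewrite subrr mul0r.
Qed.

Lemma pi3_ricci_symmetric g Rm :
  (ricci g Rm)^T = ricci g Rm -> forall x y z w, pi3 g Rm x y z w = 0.
Proof.
move=> sRic x y z w.
by rewrite /pi3 antip_symmetric // /dotp /wedgep !mxE !mul0r subrr mulr0 addr0 mulr0.
Qed.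

Lemma wedgep0 g x y z w : wedgep 0 g x y z w = 0.
Proof. by rewrite /wedgep !mxE !mul0r subrr. Qed.

Lemma wedgep_eq0 g h : g \in unitmx -> (n%:R - 1 : R) != 0 ->
  (forall x y z w, wedgep h g x y z w = 0) -> h = 0.
Proof.
move=> g_unit n1_neq0 hg0; apply/matrixP=> x z; rewrite mxE.
have hgE y w : h x z * g y w = h y z * g x w.
  by apply/eqP; rewrite -subr_eq0; apply/eqP; apply: hg0.
pose c := \sum_y \sum_w h x z * g y w * ginv g w y.
have c_trace : c = h x z *+ n.
  transitivity (\sum_(y < n) h x z * (g *m ginv g) y y).
    by apply: eq_bigr=> y _; rewrite mxE mulr_sumr; apply: eq_bigr=> w _; rewrite mulrA.
  rewrite /ginv mulmxV // (eq_bigr (fun _ => h x z)); last by move=> y _; rewrite mxE eqxx mulr1.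
  by rewrite sumr_const card_ord.
have c_contract : c = h x z.
  transitivity (\sum_(y < n) (g *m ginv g) x y * h y z).
    apply: eq_bigr=> y _; rewrite mxE mulr_suml; apply: eq_bigr=> w _.
    by rewrite hgE -mulrA mulrC.
  by rewrite /ginv mulmxV // -[h in RHS](mul1mx h) [in RHS]mxE.
have : h x z * (n%:R - 1) = 0 by rewrite mulrBr mulr1 mulr_natr -c_trace c_contract subrr.
by move/eqP; rewrite mulf_eq0 (negbTE n1_neq0) orbF => /eqP.
Qed.

Lemma pi2_eq0P g Rm : g \in unitmx -> (n%:R - 1 : R) != 0 ->
  (forall x y z w, pi2 g Rm x y z w = 0) <->
  symp (ricci g Rm) = (scal g Rm / n%:R) *: g.
Proof.
move=> g_unit n1_neq0; split=> [pi2_0 | RicE x y z w]; last first.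
  by rewrite /pi2 RicE subrr wedgep0 mulr0.
apply/eqP; rewrite eq_sym -subr_eq0; apply/eqP; apply: (wedgep_eq0 g_unit n1_neq0).
move=> x y z w; move/eqP: (pi2_0 x y z w).
by rewrite /pi2 mulf_eq0 invr_eq0 (negbTE n1_neq0) => /eqP.
Qed.

Lemma scal_ricci g Rm : scal g Rm = \sum_j \sum_k ginv g j k * ricci g Rm j k.
Proof.
rewrite /scal exchange_big /=; apply: eq_bigr=> j _.
rewrite exchange_big /=; apply: eq_bigr=> k _.
rewrite mxE mulr_sumr; apply: eq_bigr=> i _.
rewrite mulr_sumr; apply: eq_bigr=> l _.
by rewrite mulrA [ginv g i l * _]mulrC.
Qed.

Lemma scal_einstein g Rm lam : g^T = g -> g \in unitmx ->
  ricci g Rm = lam *: g -> scal g Rm = lam * n%:R.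
Proof.
move=> sg g_unit RicE; rewrite scal_ricci RicE.
transitivity (\sum_(j < n) lam * (ginv g *m g) j j).
  apply: eq_bigr=> a _; rewrite mxE mulr_sumr; apply: eq_bigr=> b _.
  have gba : g a b = g b a by rewrite -[in LHS]sg mxE.
  by rewrite mxE gba mulrA [_ * lam]mulrC -mulrA.
rewrite /ginv mulVmx // (eq_bigr (fun _ => lam)); last by move=> a _; rewrite mxE eqxx mulr1.
by rewrite sumr_const card_ord mulr_natr.
Qed.

End CurvatureDecomposition.

Theorem lemma8p2 (R : realType) (n : nat) (M : Type)
    (g : M -> 'M[R]_n) (Rm : M -> tensor4 R n) :
  (3 <= n)%N ->
  (* pseudo-Riemannian: g symmetric and nondegenerate *)
  (forall p, (g p)^T = g p) ->
  (forall p, g p \in unitmx) ->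
  (* curvature of a torsion free connection: skew in (x,y), first Bianchi *)
  (forall p i j k l, Rm p i j k l = - Rm p j i k l) ->
  (forall p i j k l, Rm p i j k l + Rm p j k i l + Rm p k i j l = 0) ->
  (* Ricci symmetric *)
  (forall p, (ricci (g p) (Rm p))^T = ricci (g p) (Rm p)) ->
  ((exists lam : M -> R, forall p, ricci (g p) (Rm p) = lam p *: g p) <->
   (forall p i j k l, pi2 (g p) (Rm p) i j k l = 0 /\ pi3 (g p) (Rm p) i j k l = 0)).
Proof.
move=> n_ge3 sg g_unit _ _ sRic.
have two_neq0 : (2%:R : R) != 0 by rewrite pnatr_eq0.
have n_neq0 : (n%:R : R) != 0 by rewrite pnatr_eq0 -lt0n (leq_trans _ n_ge3).
have n1_neq0 : (n%:R - 1 : R) != 0.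
  rewrite -(natrB R (n:=1)); last exact: leq_trans _ n_ge3.
  by rewrite pnatr_eq0 subn_eq0 -ltnNge (leq_trans _ n_ge3).
have RicE p : symp (ricci (g p) (Rm p)) = ricci (g p) (Rm p) by exact: symp_symmetric.
split=> [[lam einstein] p i j k l | pi_eq0].
  split; last exact: pi3_ricci_symmetric.
  apply: (pi2_eq0P (Rm p) (g_unit p) n1_neq0).2.
  by rewrite RicE (scal_einstein (sg p) (g_unit p) (einstein p)) mulfK.
exists (fun p => scal (g p) (Rm p) / n%:R) => p.
rewrite -RicE; apply/(pi2_eq0P (Rm p) (g_unit p) n1_neq0) => x y z w.
exact: (pi_eq0 p x y z w).1.
Qed.
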